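(* Let $\mathcal H$ be a finite-dimensional complex Hilbert space, $A,B$ Hermitian operators on $\mathcal H$, $\rho$ a density operator on $\mathcal H$ and $|\phi\rangle$ a unit vector. Set $W_{AB}=\langle\phi|B\rho A|\phi\rangle$. Then $$\big(\langle\Delta A\rangle^{\phi}_{\rho}\big)^2\big(\langle\Delta B\rangle^{\phi}_{\rho}\big)^2\ge\Big[\tfrac{1}{2i}\operatorname{Tr}(\rho[A,B])-\operatorname{Im}W_{AB}\Big]^2+\Big[\tfrac12\operatorname{Tr}(\rho\{A,B\})-\operatorname{Re}W_{AB}\Big]^2,$$ and in particular $\big(\langle\Delta A\rangle^{\phi}_{\rho}\big)^2\big(\langle\Delta B\rangle^{\phi}_{\rho}\big)^2\ge\big[\tfrac{1}{2i}\operatorname{Tr}(\rho[A,B])-\operatorname{Im}W_{AB}\big]^2$. The same lower bound holds with $\langle\Delta A\rangle^{\phi}_{\rho},\langle\Delta B\rangle^{\phi}_{\rho}$ replaced by $\langle\Delta A_w\rangle^{\phi}_{\rho},\langle\Delta B_w\rangle^{\phi}_{\rho}$ whenever $\langle\phi|\rho|\phi\rangle>0$.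
   Context: For a density operator $\rho$, Hermitian $X$ and unit vector $|\phi\rangle$: $\big(\langle\Delta X\rangle^{\phi}_{\rho}\big)^2:=\operatorname{Tr}(X^2\rho)-\langle\phi|X\rho X|\phi\rangle$; if $\langle\phi|\rho|\phi\rangle>0$, $\big(\langle\Delta X_w\rangle^{\phi}_{\rho}\big)^2:=\operatorname{Tr}(X^2\rho)-\frac{|\langle\phi|X\rho|\phi\rangle|^2}{\langle\phi|\rho|\phi\rangle}$. $[A,B]=AB-BA$, $\{A,B\}=AB+BA$. *)

From HB Require Import structures.
From mathcomp Require Import all_boot all_order all_algebra.
From mathcomp Require Import complex.
From mathcomp Require Import reals.
Set Implicit Arguments. Unset Strict Implicit. Unset Printing Implicit Defensive.
Import Order.TTheory GRing.Theory Num.Theory.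
Local Open Scope ring_scope.

Definition adjmx (C : numClosedFieldType) m n (M : 'M[C]_(m, n)) : 'M[C]_(n, m) :=
  (map_mx Num.conj M)^T.

Definition braket (C : numClosedFieldType) n (u : 'cV[C]_n) (M : 'M[C]_n) (v : 'cV[C]_n) : C :=
  (adjmx u *m M *m v) 0 0.

Definition is_hermitian (C : numClosedFieldType) n (M : 'M[C]_n) : Prop :=
  adjmx M = M.

Definition psd (C : numClosedFieldType) n (M : 'M[C]_n) : Prop :=
  is_hermitian M /\ forall v : 'cV[C]_n, 0 <= braket v M v.

Definition density (C : numClosedFieldType) n (rho : 'M[C]_n) : Prop :=
  psd rho /\ \tr rho = 1.

Definition unit_vector (C : numClosedFieldType) n (phi : 'cV[C]_n) : Prop :=
  braket phi 1%:M phi = 1.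

Definition commmx (C : numClosedFieldType) n (A B : 'M[C]_n) := A *m B - B *m A.
Definition acommmx (C : numClosedFieldType) n (A B : 'M[C]_n) := A *m B + B *m A.

(* (<Delta X>^phi_rho)^2 := Tr(X^2 rho) - <phi| X rho X |phi> *)
Definition var_phi (C : numClosedFieldType) n (X rho : 'M[C]_n) (phi : 'cV[C]_n) : C :=
  \tr (X *m X *m rho) - braket phi (X *m rho *m X) phi.

(* (<Delta X_w>^phi_rho)^2 := Tr(X^2 rho) - |<phi|X rho|phi>|^2 / <phi|rho|phi> *)
Definition var_w (C : numClosedFieldType) n (X rho : 'M[C]_n) (phi : 'cV[C]_n) : C :=
  \tr (X *m X *m rho) - `|braket phi (X *m rho) phi| ^+ 2 / braket phi rho phi.

(* Let Q := 1 - |phi><phi| and <Y, Z>_rho := Tr(Y^* rho Z), a positive semidefinite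
   Hermitian form on matrices.  The phi-variance of a Hermitian X is <X Q, X Q>_rho,
   and <A Q, B Q>_rho = Tr(A rho B) - conj W has real part d and imaginary part -c, so
   the bound is the Cauchy-Schwarz inequality for this form.  Cauchy-Schwarz again,
   for the vectors X phi and phi, gives |<phi|X rho|phi>|^2 <= <phi|X rho X|phi> <phi|rho|phi>,
   i.e. the weak variance dominates the phi-variance. *)
From HB Require Import structures.
From mathcomp Require Import all_boot all_order all_algebra.
From mathcomp Require Import complex.
From mathcomp Require Import reals.
From mathcomp Require Import ring lra.
Import Order.TTheory GRing.Theory Num.Theory.
Local Open Scope ring_scope.

Lemma le_mul_of_quadratic_ge0 (R : realFieldType) (a b N : R) : 0 <= N -> 0 <= b ->
  (forall t, 0 <= a - 2 * t * N + t ^+ 2 * N * b) -> N <= a * b.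
Proof.
move=> N0 b0 quad_ge0.
have [-> | N_neq0] := eqVneq N 0; first by have := quad_ge0 0; nra.
have N_gt0 : 0 < N by rewrite lt_def N_neq0 N0.
have [b_eq0 | b_neq0] := eqVneq b 0.
  have := quad_ge0 ((a + 1) / (2 * N)); rewrite b_eq0 mulr0 addr0.
  have -> : 2 * ((a + 1) / (2 * N)) * N = a + 1 by field; rewrite gt_eqF.
  lra.
have b_gt0 : 0 < b by rewrite lt_def b_neq0 b0.
have := quad_ge0 b^-1.
have -> : a - 2 * b^-1 * N + b^-1 ^+ 2 * N * b = (a * b - N) / b by field; rewrite gt_eqF.
by rewrite pmulr_lge0 ?invr_gt0 // subr_ge0.
Qed.

Lemma sesquilinear_cauchy_schwarz (R : rcfType) (a b z : R[i]) : 0 <= a -> 0 <= b ->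
  (forall l, 0 <= a - l * z - l^* * z^* + l^* * l * b) -> `|z| ^+ 2 <= a * b.
Proof.
rewrite normCK; case: a => a a'; case: b => b b'; case: z => x y.
rewrite !lecE /= => /andP[/eqP -> a0] /andP[/eqP -> b0] form_ge0.
apply/andP; split; first by apply/eqP; ring.
suff : x ^+ 2 + y ^+ 2 <= a * b by lra.
apply: le_mul_of_quadratic_ge0 => //; first by nra.
(* l := t * conj z turns the hypothesis into a real quadratic in t *)
move=> t; have := form_ge0 (Complex (t * x) (- (t * y))).
by rewrite lecE /= => /andP[_]; lra.
Qed.

Section Adjoint.
Variable C : numClosedFieldType.

Lemma adjmxM m n p (M : 'M[C]_(m, n)) (N : 'M_(n, p)) :
  adjmx (M *m N) = adjmx N *m adjmx M.
Proof. by rewrite /adjmx map_mxM trmx_mul. Qed.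

Lemma adjmxK m n (M : 'M[C]_(m, n)) : adjmx (adjmx M) = M.
Proof. by apply/matrixP => i j; rewrite !mxE conjCK. Qed.

Lemma adjmxB m n (M N : 'M[C]_(m, n)) : adjmx (M - N) = adjmx M - adjmx N.
Proof. by apply/matrixP => i j; rewrite !mxE rmorphB. Qed.

Lemma adjmxZ m n a (M : 'M[C]_(m, n)) : adjmx (a *: M) = a^* *: adjmx M.
Proof. by apply/matrixP => i j; rewrite !mxE rmorphM. Qed.

Lemma adjmx1 n : adjmx (1%:M : 'M[C]_n) = 1%:M.
Proof. by apply/matrixP => i j; rewrite !mxE rmorph_nat eq_sym. Qed.

Lemma mxtrace_adj n (M : 'M[C]_n) : \tr (adjmx M) = (\tr M)^*.
Proof. by rewrite /adjmx mxtrace_tr trace_map_mx. Qed.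

Lemma braket_conj n (u v : 'cV[C]_n) M : (braket u M v)^* = braket v (adjmx M) u.
Proof.
have conj_entry (N : 'M[C]_1) : (N 0 0)^* = (adjmx N) 0 0 by rewrite !mxE.
by rewrite /braket conj_entry !adjmxM adjmxK mulmxA.
Qed.

Lemma mxtrace11 (M : 'M[C]_1) : \tr M = M 0 0.
Proof. by rewrite /mxtrace big_ord1. Qed.

End Adjoint.

Section RhoForm.
Variables (C : numClosedFieldType) (n : nat) (rho : 'M[C]_n).

Definition rho_form {m} (Y Z : 'M[C]_(n, m)) := \tr (adjmx Y *m rho *m Z).

Lemma rho_form_ge0 m (Y : 'M[C]_(n, m)) : psd rho -> 0 <= rho_form Y Y.
Proof.
move=> [_ rho_ge0]; apply: sumr_ge0 => i _.
have -> : (adjmx Y *m rho *m Y) i i = braket (col i Y) rho (col i Y).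
  rewrite /braket !mxE; apply: eq_bigr => k _.
  by rewrite !mxE; congr (_ * _); apply: eq_bigr => l _; rewrite !mxE.
exact: rho_ge0.
Qed.

Lemma rho_form_conj m (Y Z : 'M[C]_(n, m)) : is_hermitian rho ->
  (rho_form Y Z)^* = rho_form Z Y.
Proof. by move=> rhoH; rewrite /rho_form -mxtrace_adj !adjmxM adjmxK rhoH mulmxA. Qed.

Lemma rho_form_subZ m (Y Z : 'M[C]_(n, m)) l :
  rho_form (Y - l *: Z) (Y - l *: Z) =
  rho_form Y Y - l * rho_form Y Z - l^* * rho_form Z Y + l^* * l * rho_form Z Z.
Proof.
rewrite /rho_form adjmxB adjmxZ !mulmxBl !mulmxBr -!scalemxAl -!scalemxAr.
by rewrite !raddfB /= !mxtraceZ; ring.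
Qed.

End RhoForm.
Arguments rho_form {C n} rho {m} Y Z.

Lemma rho_form_cauchy_schwarz (R : rcfType) n m (rho : 'M[R[i]]_n) (Y Z : 'M_(n, m)) :
  psd rho -> `|rho_form rho Y Z| ^+ 2 <= rho_form rho Y Y * rho_form rho Z Z.
Proof.
move=> rho_psd; apply: sesquilinear_cauchy_schwarz; try exact: rho_form_ge0.
move=> l; rewrite rho_form_conj; last exact: rho_psd.1.
by rewrite -rho_form_subZ; apply: rho_form_ge0.
Qed.

Section PerpProjection.
Variables (C : numClosedFieldType) (n : nat) (phi : 'cV[C]_n).

Definition proj_perp : 'M[C]_n := 1%:M - phi *m adjmx phi.

Lemma adjmx_proj_perp : adjmx proj_perp = proj_perp.
Proof. by rewrite /proj_perp adjmxB adjmx1 adjmxM adjmxK. Qed.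

Hypothesis phi_unit : unit_vector phi.

Lemma adjmx_mul_unit : adjmx phi *m phi = 1%:M.
Proof.
rewrite (mx11_scalar (adjmx phi *m phi)).
by move: phi_unit; rewrite /unit_vector /braket mulmx1 => ->.
Qed.

Lemma proj_perp_idem : proj_perp *m proj_perp = proj_perp.
Proof.
have P_idem : phi *m adjmx phi *m (phi *m adjmx phi) = phi *m adjmx phi.
  by rewrite mulmxA -(mulmxA phi) adjmx_mul_unit mulmx1.
by rewrite /proj_perp mulmxBl mul1mx mulmxBr mulmx1 P_idem subrr subr0.
Qed.

Lemma mxtrace_proj_perp (M : 'M[C]_n) :
  \tr (proj_perp *m M *m proj_perp) = \tr M - braket phi M phi.
Proof.
rewrite mxtrace_mulC mulmxA proj_perp_idem /proj_perp mulmxBl mul1mx raddfB /=.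
by rewrite -mulmxA mxtrace_mulC mxtrace11.
Qed.

Variable rho : 'M[C]_n.

Lemma rho_form_proj_perp (X Y : 'M[C]_n) :
  rho_form rho (X *m proj_perp) (Y *m proj_perp) =
  \tr (adjmx X *m rho *m Y) - braket phi (adjmx X *m rho *m Y) phi.
Proof. by rewrite /rho_form adjmxM adjmx_proj_perp -mxtrace_proj_perp !mulmxA. Qed.

Lemma var_phiE (X : 'M[C]_n) : is_hermitian X ->
  var_phi X rho phi = rho_form rho (X *m proj_perp) (X *m proj_perp).
Proof.
by move=> XH; rewrite rho_form_proj_perp XH /var_phi -mulmxA (mxtrace_mulC X).
Qed.

Lemma var_phi_ge0 (X : 'M[C]_n) : psd rho -> is_hermitian X -> 0 <= var_phi X rho phi.
Proof. by move=> rho_psd XH; rewrite var_phiE //; apply: rho_form_ge0. Qed.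

Lemma rho_form_proj_perp_cross (A B : 'M[C]_n) :
  is_hermitian A -> is_hermitian B -> is_hermitian rho ->
  rho_form rho (A *m proj_perp) (B *m proj_perp) =
  \tr (A *m rho *m B) - (braket phi (B *m rho *m A) phi)^*.
Proof.
by move=> AH BH rhoH; rewrite rho_form_proj_perp AH braket_conj !adjmxM AH BH rhoH !mulmxA.
Qed.

End PerpProjection.
Arguments proj_perp {C n} phi.

Section TraceOfCommutators.
Variables (C : numClosedFieldType) (n : nat) (A B rho : 'M[C]_n).
Hypotheses (AH : is_hermitian A) (BH : is_hermitian B) (rhoH : is_hermitian rho).

Lemma mxtrace_rho_AB : \tr (rho *m (A *m B)) = (\tr (A *m rho *m B))^*.
Proof.
by rewrite -mxtrace_adj !adjmxM AH BH rhoH mulmxA mxtrace_mulC mulmxA.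
Qed.

Lemma mxtrace_rho_BA : \tr (rho *m (B *m A)) = \tr (A *m rho *m B).
Proof. by rewrite mulmxA mxtrace_mulC mulmxA. Qed.

Lemma mxtrace_rho_acommmx :
  \tr (rho *m acommmx A B) = 2%:R * 'Re (\tr (A *m rho *m B)).
Proof.
rewrite /acommmx mulmxDr mxtraceD mxtrace_rho_AB mxtrace_rho_BA ReE.
by rewrite mulrC divfK ?pnatr_eq0 // addrC.
Qed.

Lemma mxtrace_rho_commmx :
  \tr (rho *m commmx A B) = - (2%:R * 'i) * 'Im (\tr (A *m rho *m B)).
Proof.
rewrite /commmx mulmxBr raddfB /= mxtrace_rho_AB mxtrace_rho_BA ImE.
set y := _ - _.
have -> : - (2%:R * 'i) * ('i * y / 2%:R) = - ('i * 'i) * (y * 2%:R / 2%:R) :> C by ring.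
by rewrite mulCii opprK mul1r mulfK ?pnatr_eq0.
Qed.

End TraceOfCommutators.

Lemma var_phi_le_var_w (R : rcfType) n (X rho : 'M[R[i]]_n) (phi : 'cV_n) :
  psd rho -> is_hermitian X -> 0 < braket phi rho phi ->
  var_phi X rho phi <= var_w X rho phi.
Proof.
move=> rho_psd XH phi_rho_gt0.
rewrite /var_phi /var_w lerD2l lerN2 ler_pdivrMr //.
have rho_formE (Y Z : 'cV_n) : rho_form rho Y Z = braket Y rho Z.
  by rewrite /rho_form mxtrace11.
have := @rho_form_cauchy_schwarz _ _ _ rho (X *m phi) phi rho_psd.
by rewrite !rho_formE /braket !adjmxM XH !mulmxA.
Qed.

Local Open Scope complex_scope.

Theorem mainTheorem8 (R : realType) (n : nat) (A B rho : 'M[R[i]]_n) (phi : 'cV[R[i]]_n) :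
  is_hermitian A -> is_hermitian B -> density rho -> unit_vector phi ->
  let W := braket phi (B *m rho *m A) phi in
  let c := (2%:R * 'i)^-1 * \tr (rho *m commmx A B) - 'Im W in
  let d := 2%:R^-1 * \tr (rho *m acommmx A B) - 'Re W in
  [/\ var_phi A rho phi * var_phi B rho phi >= c ^+ 2 + d ^+ 2,
      var_phi A rho phi * var_phi B rho phi >= c ^+ 2 &
      (0 < braket phi rho phi ->
         var_w A rho phi * var_w B rho phi >= c ^+ 2)].
Proof.
move=> AH BH [rho_psd _] phi_unit W c d.
have rhoH := rho_psd.1.
set z := rho_form rho (A *m proj_perp phi) (B *m proj_perp phi).
have zE : z = \tr (A *m rho *m B) - W^* by apply: rho_form_proj_perp_cross.
have dE : d = 'Re z.
  by rewrite /d mxtrace_rho_acommmx // mulKf ?pnatr_eq0 // zE raddfB /= Re_conj.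
have cE : c = - 'Im z.
  rewrite /c mxtrace_rho_commmx // mulNr mulrN mulKf ?mulf_neq0 ?pnatr_eq0 ?neq0Ci //.
  by rewrite zE raddfB /= Im_conj opprK opprD.
have var_bound : c ^+ 2 + d ^+ 2 <= var_phi A rho phi * var_phi B rho phi.
  rewrite cE dE sqrrN addrC -normC2_Re_Im !var_phiE //.
  exact: rho_form_cauchy_schwarz.
have var_bound_c : c ^+ 2 <= var_phi A rho phi * var_phi B rho phi.
  by apply: le_trans var_bound; rewrite lerDl dE -realEsqr Creal_Re.
split=> // phi_rho_gt0; apply: (le_trans var_bound_c).
by apply: ler_pM; rewrite ?var_phi_ge0 ?var_phi_le_var_w.
Qed.
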